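(* Let $G=(V,E)$ be a bispanning graph with $|V|\ge 3$. (i) If $G$ contains a pair of parallel edges, then $G$ is composite. (ii) If $G$ is atomic, then $G$ is simple. (iii) If $G$ contains a cut-vertex (vertex-connectivity $1$), then $G$ is composite. (iv) If $G$ has edge-connectivity $2$, then $G$ is composite. (v) If $G$ contains a vertex of degree $2$, then $G$ is composite.
   Context: Graphs are finite, undirected, may have parallel edges, no loops; simple means no parallel edges. A spanning tree of $G$ is $T\subseteq E$ with $(V,T)$ connected and acyclic; $G$ is bispanning if $E$ is the union of two disjoint spanning trees. A bispanning graph $G$ is composite if it contains a subgraph which is bispanning and is neither $G$ itself nor a single vertex; otherwise it is atomic. A cut-vertex is a vertex whose deletion increases the number of connected components. Edge-connectivity is the largest $k$ such that $|E|>k$ and deleting fewer than $k$ edges leaves $G$ connected. *)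

(* Finite multigraphs: vertex type V, edge type E (both finite),
   each edge e has endpoints src e and dst e (loopless: src e != dst e). *)
From mathcomp Require Import all_boot.
Set Implicit Arguments. Unset Strict Implicit. Unset Printing Implicit Defensive.

Section MultiGraph.
Variables (V E : finType) (src dst : E -> V).

Definition joins (e : E) (x y : V) : bool :=
  ((src e == x) && (dst e == y)) || ((src e == y) && (dst e == x)).

Definition adj (F : {set E}) : rel V := fun x y => [exists e in F, joins e x y].

Definition conn (F : {set E}) (x y : V) : bool := connect (adj F) x y.

Definition subgraph (S : {set V}) (F : {set E}) : Prop :=
  forall e, e \in F -> (src e \in S) && (dst e \in S).

Definition connected_on (S : {set V}) (T : {set E}) : Prop :=
  forall x y, x \in S -> y \in S -> conn T x y.

(* T is acyclic: no edge of T lies on a cycle of T, i.e. the endpoints of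
   each edge e of T are not connected in T minus e *)
Definition acyclic (T : {set E}) : Prop :=
  forall e, e \in T -> ~~ conn (T :\ e) (src e) (dst e).

Definition spanning_tree (S : {set V}) (F : {set E}) (T : {set E}) : Prop :=
  T \subset F /\ connected_on S T /\ acyclic T.

Definition bispanning (S : {set V}) (F : {set E}) : Prop :=
  exists T1 T2 : {set E},
    [/\ spanning_tree S F T1, spanning_tree S F T2,
        T1 :&: T2 = set0 & T1 :|: T2 = F].

Definition bispanningG : Prop := bispanning [set: V] [set: E].

(* G is composite: bispanning and has a bispanning subgraph which is neither
   G itself nor a single vertex (subgraphs have nonempty vertex sets) *)
Definition composite : Prop :=
  bispanningG /\
  exists (S : {set V}) (F : {set E}),
    [/\ subgraph S F, bispanning S F,
        ~ (S = [set: V] /\ F = [set: E]) & 1 < #|S|].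

Definition atomic : Prop := bispanningG /\ ~ composite.

Definition has_parallel_edges : Prop :=
  exists e1 e2 : E, e1 != e2 /\ joins e2 (src e1) (dst e1).

Definition simple : Prop := ~ has_parallel_edges.

Definition ncomp (S : {set V}) (F : {set E}) : nat :=
  #|[set [set y in S | conn F x y] | x in S]|.

Definition avoid (v : V) : {set E} := [set e | (src e != v) && (dst e != v)].

Definition cut_vertex (v : V) : Prop :=
  ncomp [set: V] [set: E] < ncomp (~: [set v]) (avoid v).

Definition ec_ok (k : nat) : Prop :=
  k < #|E| /\
  forall D : {set E}, #|D| < k -> connected_on [set: V] (~: D).

Definition edge_connectivity_is (k : nat) : Prop :=
  ec_ok k /\ forall k', ec_ok k' -> k' <= k.

Definition degree (v : V) : nat := #|[set e | (src e == v) || (dst e == v)]|.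

End MultiGraph.

From mathcomp Require Import all_boot zify.
Set Implicit Arguments. Unset Strict Implicit. Unset Printing Implicit Defensive.

(* Part (ii) is the contrapositive of (i), and (i) holds because two parallel
   edges form a bispanning graph on two vertices.  The other parts rest on one
   observation: let S be a proper set of at least two vertices such that every
   edge of the tree T_i leaving S does so through a single vertex c_i of S.
   Collapsing V \ S onto c_i maps T_i-paths to paths inside S, so T_i
   restricted to S spans G[S], and G[S] is a proper bispanning subgraph.  For a
   cut-vertex v take S = {v} together with a component of G - v.  For a cut
   with at most two crossing edges (given by edge-connectivity 2, or by the
   edges at a vertex of degree 2), each of the two disjoint connected trees
   crosses it, hence crosses it exactly once; take for S the side with at least
   two vertices. *)

Lemma connect_hom (T T' : finType) (r : rel T) (r' : rel T') (f : T -> T') :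
  (forall a b, r a b -> f a = f b \/ r' (f a) (f b)) ->
  forall x y, connect r x y -> connect r' (f x) (f y).
Proof.
move=> hom x y /connectP [p]; elim: p x => [|z p IHp] x /=.
  by move=> _ ->.
case/andP=> rxz pz yp; apply: connect_trans (IHp z pz yp).
by case: (hom _ _ rxz) => [->|r'xz]; [exact: connect0 | exact: connect1].
Qed.

Lemma connect_exit (T : finType) (r : rel T) (A : {pred T}) x y :
  connect r x y -> x \in A -> y \notin A ->
  exists a b, [/\ r a b, a \in A & b \notin A].
Proof.
move=> /connectP [p]; elim: p x => [|z p IHp] x /=; first by move=> _ -> ->.
case/andP=> rxz pz yz xA yA.
by case zA: (z \in A); [exact: IHp pz yz zA yA | exists x, z; rewrite zA].
Qed.

Section Bispanning.
Variables (V E : finType) (src dst : E -> V).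
Implicit Types (F T I D : {set E}) (S : {set V}).

Lemma joinsC e x y : joins src dst e x y = joins src dst e y x.
Proof. by rewrite /joins orbC. Qed.

Lemma joins_endpoints e : joins src dst e (src e) (dst e).
Proof. by rewrite /joins !eqxx. Qed.

Lemma adj_of_joins F e x y :
  e \in F -> joins src dst e x y -> adj src dst F x y.
Proof. by move=> eF exy; apply/existsP; exists e; rewrite eF. Qed.

Lemma adj_sym F : symmetric (adj src dst F).
Proof.
by move=> x y; apply/existsP/existsP => -[e /andP [eF exy]]; exists e;
  rewrite eF joinsC.
Qed.

Lemma conn_sym F : symmetric (conn src dst F).
Proof. exact/sym_connect_sym/adj_sym. Qed.

Lemma conn_trans F y x z :
  conn src dst F x y -> conn src dst F y z -> conn src dst F x z.
Proof. exact: connect_trans. Qed.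

Lemma conn_subset F F' x y :
  F \subset F' -> conn src dst F x y -> conn src dst F' x y.
Proof.
move=> sFF'; apply: connect_sub => a b /existsP [e /andP [eF eab]].
by apply/connect1/(adj_of_joins (subsetP sFF' e eF) eab).
Qed.

Lemma conn_set0 x y : conn src dst set0 x y -> x = y.
Proof.
move=> /connectP [[|z p]] /=; first by move=> _ ->.
by case/andP=> /existsP [e]; rewrite inE.
Qed.

Lemma ncomp_gt0 S F x : x \in S -> 0 < ncomp src dst S F.
Proof.
by move=> xS; apply/card_gt0P; exists [set y in S | conn src dst F x y];
  apply: imset_f.
Qed.

Lemma ncomp_gt1 S F : 1 < ncomp src dst S F ->
  exists x y, [/\ x \in S, y \in S & ~~ conn src dst F x y].
Proof.
case/card_gt1P=> _ [_ [/imsetP [x xS ->] /imsetP [y yS ->] comp_xy]].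
exists x, y; split=> //; apply: contraNN comp_xy => conn_xy.
apply/eqP/setP => z; rewrite !inE.
by rewrite /conn (same_connect (sym_connect_sym (adj_sym F)) conn_xy).
Qed.

Definition induced (S : {set V}) : {set E} :=
  [set e | (src e \in S) && (dst e \in S)].

Definition crossing (S : {set V}) (e : E) : bool :=
  (src e \in S) != (dst e \in S).

Definition single_exit (S : {set V}) (T : {set E}) : Prop :=
  exists c, forall e a b,
    e \in T -> joins src dst e a b -> a \in S -> b \notin S -> a = c.

Lemma crossingC S e : crossing (~: S) e = crossing S e.
Proof. by rewrite /crossing !inE; case: (src e \in S); case: (dst e \in S). Qed.

Lemma crossing_joins S e a b :
  joins src dst e a b -> a \in S -> b \notin S -> crossing S e.
Proof.
move=> eab aS bS; rewrite /crossing.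
by case/orP: eab => /andP [/eqP-> /eqP->]; rewrite aS (negbTE bS).
Qed.

Lemma component_not_crossing F x e :
  e \in F -> ~~ crossing [set z | conn src dst F x z] e.
Proof.
move=> eF; rewrite /crossing !inE negbK.
have conn_e : conn src dst F (src e) (dst e).
  exact/connect1/(adj_of_joins eF (joins_endpoints e)).
apply/eqP; apply/idP/idP => [x_src | x_dst].
  exact: conn_trans x_src conn_e.
by apply: conn_trans x_dst _; rewrite conn_sym.
Qed.

Lemma connected_crossing T S x y :
  connected_on src dst setT T -> x \in S -> y \notin S ->
  exists2 e, e \in T & crossing S e.
Proof.
move=> connT xS yS.
have [a [b [/existsP [e /andP [eT eab]] aS bS]]] :=
  connect_exit (connT x y (in_setT x) (in_setT y)) xS yS.
by exists e; last exact: crossing_joins eab aS bS.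
Qed.

Lemma single_exit_unique_crossing S T e0 :
  (forall e, e \in T -> crossing S e -> e = e0) -> single_exit S T.
Proof.
move=> unique_e0; exists (if src e0 \in S then src e0 else dst e0).
move=> e a b eT eab aS bS; rewrite -(unique_e0 e eT (crossing_joins eab aS bS)).
by case/orP: eab => /andP [/eqP-> /eqP->]; rewrite ?aS ?(negbTE bS).
Qed.

Lemma spanning_tree_induced S T :
  spanning_tree src dst setT setT T -> single_exit S T ->
  spanning_tree src dst S (induced S) (T :&: induced S).
Proof.
case=> _ [connT acycT] [c exit_c]; split; first exact: subsetIr.
split; last first.
  move=> e /setIP [eT _]; apply: contra (acycT e eT).
  by apply: conn_subset; apply/setSD/subsetIl.
move=> x y xS yS; pose f u := if u \in S then u else c.
suff: conn src dst (T :&: induced S) (f x) (f y) by rewrite /f xS yS.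
apply: connect_hom (connT x y (in_setT x) (in_setT y)).
move=> a b /existsP [e /andP [eT eab]]; rewrite /f.
case aS: (a \in S); case bS: (b \in S); [right | left | left | by left].
- apply: (adj_of_joins _ eab); rewrite !inE eT.
  by case/orP: eab => /andP [/eqP-> /eqP->]; rewrite aS bS.
- by apply: (exit_c e a b eT eab); rewrite ?aS ?bS.
- by apply/esym/(exit_c e b a eT); rewrite 1?joinsC ?aS ?bS.
Qed.

Lemma composite_of_single_exit T1 T2 S :
  spanning_tree src dst setT setT T1 -> spanning_tree src dst setT setT T2 ->
  T1 :&: T2 = set0 -> T1 :|: T2 = setT ->
  1 < #|S| -> S != setT -> single_exit S T1 -> single_exit S T2 ->
  composite src dst.
Proof.
move=> tree1 tree2 disj12 cover12 S_gt1 S_proper exit1 exit2.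
split; first by exists T1, T2.
exists S, (induced S); split=> //.
- by move=> e; rewrite inE.
- exists (T1 :&: induced S), (T2 :&: induced S).
  split; try exact: spanning_tree_induced.
    by rewrite setIACA disj12 set0I.
  by rewrite -setIUl cover12 setTI.
- by case=> S_full _; rewrite S_full eqxx in S_proper.
Qed.

Lemma single_exits_small_cut T1 T2 S I x y :
  connected_on src dst setT T1 -> connected_on src dst setT T2 ->
  T1 :&: T2 = set0 -> #|I| <= 2 -> (forall e, crossing S e -> e \in I) ->
  x \in S -> y \notin S -> single_exit S T1 /\ single_exit S T2.
Proof.
move=> conn1 conn2 disj12 I_le2 crossI xS yS.
have crossed T : connected_on src dst setT T -> 0 < #|T :&: I|.
  move=> connT; have [e eT eS] := connected_crossing connT xS yS.
  by apply/card_gt0P; exists e; rewrite inE eT crossI.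
have sum_le2 : #|T1 :&: I| + #|T2 :&: I| <= 2.
  rewrite -cardsUI setIACA disj12 set0I cards0 addn0 (leq_trans _ I_le2) //.
  by rewrite subset_leq_card // -setIUl subsetIr.
have exit T : #|T :&: I| = 1 -> single_exit S T.
  move=> /eqP/cards1P [e0 TI_e0]; apply: (@single_exit_unique_crossing _ _ e0).
  by move=> e eT eS; apply/set1P; rewrite -TI_e0 inE eT crossI.
have := crossed _ conn1; have := crossed _ conn2.
by split; apply: exit; lia.
Qed.

Lemma composite_of_small_cut S I x y :
  bispanningG src dst -> 3 <= #|V| -> #|I| <= 2 ->
  (forall e, crossing S e -> e \in I) -> x \in S -> y \notin S ->
  composite src dst.
Proof.
move=> [T1 [T2 [tree1 tree2 disj12 cover12]]] V_ge3 I_le2.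
have side S' x' y' : (forall e, crossing S' e -> e \in I) ->
    x' \in S' -> y' \notin S' -> 1 < #|S'| -> composite src dst.
  move=> crossI xS yS S_gt1.
  have [exit1 exit2] :=
    single_exits_small_cut tree1.2.1 tree2.2.1 disj12 I_le2 crossI xS yS.
  apply: composite_of_single_exit tree1 tree2 disj12 cover12 S_gt1 _
    exit1 exit2.
  by apply/eqP => S_full; rewrite S_full inE in yS.
move=> crossI xS yS.
have [S_gt1 | S_le1] := ltnP 1 #|S|; first exact: side xS yS _.
apply: (side (~: S) y x); rewrite ?inE ?negbK //.
- by move=> e; rewrite crossingC; apply: crossI.
- by have := cardsC S; lia.
Qed.

Lemma spanning_tree_card_gt1 T :
  3 <= #|V| -> connected_on src dst setT T -> 1 < #|T|.
Proof.
move=> V_ge3 connT.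
have [x [y [_ _ xy]]] :
    exists x y, [/\ x \in [set: V], y \in [set: V] & x != y].
  by apply/card_gt1P; rewrite cardsT; lia.
have y_out : y \notin [set x] by rewrite inE eq_sym.
have [e eT _] := connected_crossing connT (set11 x) y_out.
have [z] : exists z, z \in ~: [set src e; dst e].
  by apply/card_gt0P; have := cardsC [set src e; dst e]; rewrite cards2; lia.
rewrite !inE negb_or => /andP [z_src z_dst].
have src_out : src e \notin [set z] by rewrite inE eq_sym.
have [e' e'T e'_cross] := connected_crossing connT (set11 z) src_out.
apply/card_gt1P; exists e, e'; split=> //; apply: contraTneq e'_cross => <-.
by rewrite /crossing !inE !(eq_sym _ z) (negbTE z_src) (negbTE z_dst).
Qed.

Lemma disconnecting_set_ec2 :
  3 < #|E| -> edge_connectivity_is src dst 2 ->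
  exists D x y, #|D| <= 2 /\ ~~ conn src dst (~: D) x y.
Proof.
move=> E_gt3 [_ ec_max].
pose disconnecting (D : {set E}) :=
  (#|D| < 3) && ~~ [forall x, forall y, conn src dst (~: D) x y].
case: (pickP disconnecting) => [D /andP [D_lt3] | none].
  by case/forallPn=> x /forallPn [y nxy]; exists D, x, y.
suff : 3 <= 2 by [].
apply: ec_max; split=> // D D_lt3 x y _ _.
move: (none D); rewrite /disconnecting D_lt3.
by move=> /negbFE/forallP/(_ x)/forallP.
Qed.

Lemma composite_of_cut_vertex v :
  bispanningG src dst -> cut_vertex src dst v -> composite src dst.
Proof.
move=> [T1 [T2 [tree1 tree2 disj12 cover12]]] cut_v.
have G_comp := ncomp_gt0 [set: E] (in_setT v).
have [x [y []]] := ncomp_gt1 (leq_ltn_trans G_comp cut_v).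
rewrite !inE => xv yv nxy.
pose S := v |: [set z | conn src dst (avoid src dst v) x z].
have exit T : single_exit S T.
  exists v => e a b _ eab; case: (eqVneq a v) => // av.
  rewrite !inE (negbTE av) /= => xa; rewrite negb_or => /andP [bv /negP []].
  apply: conn_trans xa (connect1 (adj_of_joins _ eab)).
  by rewrite inE; case/orP: eab => /andP [/eqP-> /eqP->]; rewrite av bv.
apply: composite_of_single_exit tree1 tree2 disj12 cover12 _ _
  (exit T1) (exit T2).
  apply/card_gt1P; exists v, x.
  by rewrite !inE eqxx (eq_sym v) xv /conn connect0 orbT.
apply/eqP => S_full; have := in_setT y.
by rewrite -S_full !inE (negbTE yv) (negbTE nxy).
Qed.

Lemma composite_of_edge_connectivity2 :
  bispanningG src dst -> 3 <= #|V| -> edge_connectivity_is src dst 2 ->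
  composite src dst.
Proof.
move=> bisp V_ge3 ec2.
have E_gt3 : 3 < #|E|.
  have [T1 [T2 [tree1 tree2 disj12 cover12]]] := bisp.
  have := spanning_tree_card_gt1 V_ge3 tree1.2.1.
  have := spanning_tree_card_gt1 V_ge3 tree2.2.1.
  by have := cardsUI T1 T2; rewrite disj12 cover12 cards0 cardsT; lia.
have [D [x [y [D_le2 nxy]]]] := disconnecting_set_ec2 E_gt3 ec2.
apply: (@composite_of_small_cut [set z | conn src dst (~: D) x z] D x y) => //.
- move=> e; apply: contraTT => eD.
  by apply: component_not_crossing; rewrite inE.
- by rewrite inE /conn connect0.
- by rewrite inE.
Qed.

Lemma composite_of_degree2 v :
  bispanningG src dst -> 3 <= #|V| -> degree src dst v = 2 -> composite src dst.
Proof.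
move=> bisp V_ge3 deg_v.
have [y] : exists y, y \in [set~ v] by apply/card_gt0P; rewrite cardsC1; lia.
rewrite !inE => yv.
pose I := [set e | (src e == v) || (dst e == v)].
apply: (@composite_of_small_cut [set v] I v y bisp V_ge3).
- exact: eq_leq deg_v.
- by move=> e; rewrite /crossing !inE; case: (src e == v); case: (dst e == v).
- exact: set11.
- by rewrite inE.
Qed.

Hypothesis loopless : forall e, src e != dst e.

Lemma spanning_tree_edge F e :
  e \in F -> spanning_tree src dst [set src e; dst e] F [set e].
Proof.
move=> eF; split; first by rewrite sub1set.
have adj_e : adj src dst [set e] (src e) (dst e).
  by apply: adj_of_joins (joins_endpoints e); rewrite inE.
split.
  move=> x y /set2P [] -> /set2P [] ->; rewrite /conn ?connect0 ?connect1 //.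
  by rewrite adj_sym.
move=> f /set1P ->; rewrite setDv; apply/negP => /conn_set0 src_dst.
by have := loopless e; rewrite src_dst eqxx.
Qed.

Lemma composite_of_parallel_edges :
  bispanningG src dst -> 3 <= #|V| -> has_parallel_edges src dst ->
  composite src dst.
Proof.
move=> bisp V_ge3 [e1 [e2 [e12 e2_joins]]]; split=> //.
have ends2 : [set src e2; dst e2] = [set src e1; dst e1].
  by case/orP: e2_joins => /andP [/eqP-> /eqP->] //; rewrite setUC.
exists [set src e1; dst e1], [set e1; e2]; split.
- by move=> e /set2P [] ->; [|rewrite -ends2]; rewrite !inE !eqxx ?orbT.
- exists [set e1], [set e2]; split.
  + by apply: spanning_tree_edge; rewrite !inE eqxx.
  + by rewrite -ends2; apply: spanning_tree_edge; rewrite !inE eqxx orbT.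
  + apply/setP => e; rewrite !inE; apply/andP => -[/eqP-> /eqP e12'].
    by rewrite e12' eqxx in e12.
  + by [].
- by case=> ends_full _; have := cardsT V; rewrite -ends_full cards2; lia.
- by rewrite cards2 loopless.
Qed.

End Bispanning.

Theorem mainTheorem8 (V E : finType) (src dst : E -> V)
  (loopless : forall e, src e != dst e)
  (hG : bispanningG src dst) (hV : 3 <= #|V|) :
  [/\ has_parallel_edges src dst -> composite src dst,
      atomic src dst -> simple src dst,
      (exists v, cut_vertex src dst v) -> composite src dst,
      edge_connectivity_is src dst 2 -> composite src dst &
      (exists v, degree src dst v = 2) -> composite src dst].
Proof.
have parallel := composite_of_parallel_edges loopless hG hV.
split=> //.
- by case=> _ not_composite /parallel.
- by case=> v; apply: composite_of_cut_vertex.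
- exact: composite_of_edge_connectivity2.
- by case=> v; apply: composite_of_degree2.
Qed.
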